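(* Let a lattice $\Lambda\subset\mathbb R^3$ have Voronoi type $V_5$, i.e. its Voronoi domain is a cuboid, so $\Lambda$ is generated by pairwise orthogonal vectors $v_1,v_2,v_3$. Then any obtuse superbase of $\Lambda$ belongs to one of the following four isometry classes of obtuse superbases (superbases within one class are isometric to each other): (o) one class of 8 odd superbases $\{\pm v_1,\pm v_2,\pm v_3,\,v_0\}$ for any choice of signs, where $v_0$ is minus the sum of the three chosen vectors; the coform of any of them can be written, up to the 24 index-permutations, as $\begin{pmatrix}0&0&0\\ |v_1|^2&|v_2|^2&|v_3|^2\end{pmatrix}$; (e) three classes, each of 8 even superbases $\{v_i,\,v_j,\,v_k-v_i,\,-v_k-v_j\}$, where $v_i,v_j,v_k\in\{\pm v_1,\pm v_2,\pm v_3\}$ are pairwise orthogonal with distinct indices $i,j,k\in\{1,2,3\}$; the coform of any of them can be written, up to the 24 index-permutations, as $\begin{pmatrix}0&0&|v_i|^2\\ 0&|v_k|^2&|v_j|^2\end{pmatrix}$, where $k\in\{1,2,3\}$ determines the class and $i,j$ can be swapped.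
   Context: A lattice $\Lambda\subset\mathbb R^3$ is the set of integer combinations of a basis. A superbase is $(u_0,u_1,u_2,u_3)$ with $u_1,u_2,u_3$ a basis of $\Lambda$ and $u_0=-u_1-u_2-u_3$; conorms $p_{ij}=-u_i\cdot u_j$ ($i\ne j$, $p_{ij}=p_{ji}$); obtuse if all $p_{ij}\ge0$. The coform is the matrix $\begin{pmatrix}p_{23}&p_{13}&p_{12}\\ p_{01}&p_{02}&p_{03}\end{pmatrix}$. An index-permutation $\sigma\in S_4$ maps $p_{ij}\mapsto p_{\sigma(i)\sigma(j)}$. Two superbases are isometric if an isometry of $\mathbb R^3$ fixing the origin maps one onto the other as sets of vectors. The Voronoi domain is $V(\Lambda)=\{p: |p|\le|p-v|\ \forall v\in\Lambda\}$. *)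

From HB Require Import structures.
From mathcomp Require Import all_boot all_order all_algebra all_fingroup.
From mathcomp Require Import reals.
Set Implicit Arguments. Unset Strict Implicit. Unset Printing Implicit Defensive.
Import Order.TTheory GRing.Theory Num.Theory.
Local Open Scope ring_scope.

Section Defs.
Variable R : realType.
Notation vec := 'rV[R]_3.

Definition dot (x y : vec) : R := \sum_(l < 3) x 0 l * y 0 l.
Definition norm2 (x : vec) : R := dot x x.

Definition in_lattice (b : 'I_3 -> vec) (x : vec) : Prop :=
  exists z : 'I_3 -> int, x = \sum_(l < 3) (b l *~ z l).

Definition lin_indep (b : 'I_3 -> vec) : Prop :=
  forall c : 'I_3 -> R, \sum_(l < 3) c l *: b l = 0 -> forall l, c l = 0.

Definition lattice_basis (v b : 'I_3 -> vec) : Prop :=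
  lin_indep b /\ (forall x, in_lattice b x <-> in_lattice v x).

Definition superbase_of (v : 'I_3 -> vec) (u : 'I_4 -> vec) : Prop :=
  lattice_basis v (fun l : 'I_3 => u (lift ord0 l)) /\
  u ord0 = - (u (inord 1) + u (inord 2) + u (inord 3)).

Definition conorm (u : 'I_4 -> vec) (i j : 'I_4) : R := - dot (u i) (u j).

Definition obtuse (u : 'I_4 -> vec) : Prop :=
  forall i j : 'I_4, i != j -> 0 <= conorm u i j.

(* the coform  ( p23 p13 p12 ; p01 p02 p03 ) of a conorm function p *)
Definition coform (p : 'I_4 -> 'I_4 -> R) : 'M[R]_(2, 3) :=
  \matrix_(r < 2, c < 3)
    if r == 0 :> nat then
      (if c == 0 :> nat then p (inord 2) (inord 3)
       else if c == 1 :> nat then p (inord 1) (inord 3)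
       else p (inord 1) (inord 2))
    else p ord0 (lift ord0 c).

Definition perm_conorm (s : 'S_4) (p : 'I_4 -> 'I_4 -> R) : 'I_4 -> 'I_4 -> R :=
  fun i j => p (s i) (s j).

Definition same_set (u w : 'I_4 -> vec) : Prop :=
  forall x, (exists i, x = u i) <-> (exists i, x = w i).

Definition isometry0 (f : vec -> vec) : Prop :=
  f 0 = 0 /\ forall x y, norm2 (f x - f y) = norm2 (x - y).

Definition isometric (u w : 'I_4 -> vec) : Prop :=
  exists f, isometry0 f /\ same_set (fun i => f (u i)) w.

Definition sv (v : 'I_3 -> vec) (s : 'I_3 -> bool) (l : 'I_3) : vec :=
  if s l then - v l else v l.

Definition odd_sb (v : 'I_3 -> vec) (s : 'I_3 -> bool) : 'I_4 -> vec :=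
  fun i => match unlift ord0 i with
           | Some l => sv v s l
           | None => - (sv v s 0 + sv v s 1 + sv v s 2)
           end.

Definition even_sb (v : 'I_3 -> vec) (k i j : 'I_3) (s : 'I_3 -> bool) : 'I_4 -> vec :=
  fun n => if n == 0 :> nat then - sv v s k - sv v s j
           else if n == 1 :> nat then sv v s i
           else if n == 2 :> nat then sv v s j
           else sv v s k - sv v s i.

Definition distinct3 (k i j : 'I_3) : Prop := [/\ i != j, i != k & j != k].

Definition odd_coform (v : 'I_3 -> vec) : 'M[R]_(2, 3) :=
  \matrix_(r < 2, c < 3) if r == 0 :> nat then 0 else norm2 (v c).

Definition even_coform (v : 'I_3 -> vec) (k i j : 'I_3) : 'M[R]_(2, 3) :=
  \matrix_(r < 2, c < 3)
    if r == 0 :> nat then (if c == 2 :> nat then norm2 (v i) else 0)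
    else (if c == 0 :> nat then 0 else if c == 1 :> nat then norm2 (v k)
          else norm2 (v j)).

End Defs.

From HB Require Import structures.
From mathcomp Require Import all_boot all_order all_algebra all_fingroup.
From mathcomp Require Import reals.
From mathcomp Require Import ring lra zify.
From Stdlib Require Import FunctionalExtensionality.

(* Write the vectors of a superbase in the orthogonal basis v, u_n = sum_m z_nm v_m
   with z integral.  Selling's formula 2 x.y = sum_(i,j) p_ij (a_i - a_j) (b_i - b_j),
   for x = sum a_i u_i and y = sum b_j u_j, shows that for an obtuse superbase
   x.y <= |y|^2 whenever x is a partial sum of the u_n and y a lattice vector.  With
   y = +-v_m, every partial sum of the m-th column of z lies in [-1, 1]; as the column
   sums to 0 it is e_a - e_b, so each v_m is an oriented edge of K_4 on the indices of
   the superbase.  Since neither u_n nor u_n + u_n' vanishes, the three edges form a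
   spanning tree, i.e. a star (an odd superbase) or a path (an even one); this finite
   case analysis is decided by evaluation.  Conversely the listed superbases are
   obtuse superbases, reflections in the planes orthogonal to the v_m map the members
   of a class onto each other, and different sign choices give different sets. *)

Set Implicit Arguments. Unset Strict Implicit. Unset Printing Implicit Defensive.
Import Order.TTheory GRing.Theory Num.Theory.
Local Open Scope ring_scope.

Lemma ord3P (m : 'I_3) : [\/ m = 0, m = 1 | m = 2].
Proof.
by case: m => [[|[|[|//]]] p]; [constructor 1 | constructor 2 | constructor 3]; apply: val_inj.
Qed.

Lemma sum3 (V : zmodType) (F : 'I_3 -> V) : \sum_(l < 3) F l = F 0 + F 1 + F 2.
Proof.
by rewrite !big_ord_recl big_ord0 addr0 addrA; congr (F _ + F _ + F _); apply: val_inj.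
Qed.

Lemma inord_lift0 (l : 'I_3) : inord l.+1 = lift ord0 l :> 'I_4.
Proof. by apply: val_inj; rewrite /= inordK // ltnS ltn_ord. Qed.

Section Dot.
Variable R : realType.
Implicit Types x y z : 'rV[R]_3.

Lemma dotC x y : dot x y = dot y x.
Proof. by apply: eq_bigr => l _; rewrite mulrC. Qed.

Lemma dotDl x y z : dot (x + y) z = dot x z + dot y z.
Proof. by rewrite /dot -big_split; apply: eq_bigr => l _; rewrite mxE mulrDl. Qed.

Lemma dotZl a x y : dot (a *: x) y = a * dot x y.
Proof. by rewrite /dot mulr_sumr; apply: eq_bigr => l _; rewrite mxE mulrA. Qed.

Lemma dotNl x y : dot (- x) y = - dot x y.
Proof. by rewrite -scaleN1r dotZl mulN1r. Qed.

Lemma dotBl x y z : dot (x - y) z = dot x z - dot y z.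
Proof. by rewrite dotDl dotNl. Qed.

Lemma dot0l y : dot 0 y = 0.
Proof. by rewrite /dot big1 // => l _; rewrite mxE mul0r. Qed.

Lemma dotMzl x n y : dot (x *~ n) y = n%:~R * dot x y.
Proof. by rewrite -scaler_int dotZl. Qed.

Lemma dotDr x y z : dot x (y + z) = dot x y + dot x z.
Proof. by rewrite dotC dotDl !(dotC x). Qed.

Lemma dotZr a x y : dot x (a *: y) = a * dot x y.
Proof. by rewrite dotC dotZl dotC. Qed.

Lemma dotNr x y : dot x (- y) = - dot x y.
Proof. by rewrite dotC dotNl dotC. Qed.

Lemma dotBr x y z : dot x (y - z) = dot x y - dot x z.
Proof. by rewrite dotDr dotNr. Qed.

Lemma dot_suml (I : Type) (r : seq I) (P : pred I) (F : I -> 'rV[R]_3) y :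
  dot (\sum_(i <- r | P i) F i) y = \sum_(i <- r | P i) dot (F i) y.
Proof.
by apply: (big_morph (fun x => dot x y)) => [x z|]; [apply: dotDl | apply: dot0l].
Qed.

Lemma dot_sumr (I : Type) (r : seq I) (P : pred I) (F : I -> 'rV[R]_3) x :
  dot x (\sum_(i <- r | P i) F i) = \sum_(i <- r | P i) dot x (F i).
Proof. by rewrite dotC dot_suml; apply: eq_bigr => i _; rewrite dotC. Qed.

Lemma norm2N x : norm2 (- x) = norm2 x.
Proof. by rewrite /norm2 dotNl dotNr opprK. Qed.

Lemma norm2_ge0 x : 0 <= norm2 x.
Proof. by apply: sumr_ge0 => l _; rewrite -expr2 sqr_ge0. Qed.

Lemma norm2_eq0 x : (norm2 x == 0) = (x == 0).
Proof.
apply/eqP/eqP => [|->]; last exact: dot0l.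
move/eqP; rewrite psumr_eq0 => [/allP x0|l _]; last by rewrite -expr2 sqr_ge0.
apply/rowP => l; rewrite mxE; apply/eqP.
by have := x0 l (mem_index_enum l); rewrite -expr2 sqrf_eq0.
Qed.

Lemma norm2_gt0 x : x != 0 -> 0 < norm2 x.
Proof. by move=> x0; rewrite lt_def norm2_eq0 x0 norm2_ge0. Qed.

End Dot.

Section SameSet.
Variable R : realType.
Implicit Types u w y : 'I_4 -> 'rV[R]_3.

Lemma same_set_of u w (f g : 'I_4 -> 'I_4) :
  (forall n, u n = w (f n)) -> (forall n, w n = u (g n)) -> same_set u w.
Proof. by move=> uw wu x; split=> -[n ->]; [exists (f n) | exists (g n)]. Qed.

Lemma same_set_sym u w : same_set u w -> same_set w u.
Proof. by move=> uw x; split=> /uw. Qed.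

Lemma isometric_same_set u w y : isometric u w -> same_set w y -> isometric u y.
Proof.
case=> f [fi fw] wy; exists f; split=> // x.
by split=> [/(fw x)/(wy x) | /(wy x)/(fw x)].
Qed.

End SameSet.

Lemma int_mulBl_self_ge0 (k t : int) : -1 <= t <= 1 -> 0 <= (k - t) * k.
Proof.
move=> /andP[t1 t2]; have [k0|[k1|k1]] : k = 0 \/ 1 <= k \/ k <= -1 by lia.
- by rewrite k0 mulr0.
- by apply: mulr_ge0; lia.
- by apply: mulr_le0; lia.
Qed.

Section Selling.
Variables (R : realType) (I : finType) (u : I -> 'rV[R]_3).
Hypothesis u_sum0 : \sum_i u i = 0.

Lemma selling_dot (a b : I -> R) :
  2 * dot (\sum_i a i *: u i) (\sum_j b j *: u j) =
  \sum_i \sum_j - dot (u i) (u j) * ((a i - a j) * (b i - b j)).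
Proof.
have row0 i : \sum_j dot (u i) (u j) = 0 by rewrite -dot_sumr u_sum0 dotC dot0l.
have col0 j : \sum_i dot (u i) (u j) = 0 by rewrite -dot_suml u_sum0 dot0l.
have -> : dot (\sum_i a i *: u i) (\sum_j b j *: u j) =
    \sum_i \sum_j a i * b j * dot (u i) (u j).
  rewrite dot_suml; apply: eq_bigr => i _; rewrite dotZl dot_sumr mulr_sumr.
  by apply: eq_bigr => j _; rewrite dotZr mulrA.
set S := \sum_i \sum_j _.
have -> : \sum_i \sum_j - dot (u i) (u j) * ((a i - a j) * (b i - b j)) =
    S + \sum_i \sum_j a j * b i * dot (u j) (u i)
    - \sum_i \sum_j a i * b i * dot (u i) (u j) - \sum_i \sum_j a j * b j * dot (u i) (u j).
  rewrite /S -!big_split -!sumrB; apply: eq_bigr => i _.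
  rewrite -!big_split -!sumrB; apply: eq_bigr => j _.
  by rewrite /= (dotC (u j)); ring.
have C0 : \sum_i \sum_j a i * b i * dot (u i) (u j) = 0.
  by apply: big1 => i _; rewrite -mulr_sumr row0 mulr0.
have D0 : \sum_i \sum_j a j * b j * dot (u i) (u j) = 0.
  by rewrite exchange_big; apply: big1 => j _; rewrite -mulr_sumr col0 mulr0.
by rewrite [X in S + X]exchange_big -/S C0 D0 !subr0 mulr2n mulrDl mul1r.
Qed.

Hypothesis u_obtuse : forall i j, i != j -> dot (u i) (u j) <= 0.

(* Half of a partial sum of an obtuse superbase lies in the Voronoi domain. *)
Lemma obtuse_dot_le_norm2 (P : pred I) (q : I -> int) :
  dot (\sum_(i | P i) u i) (\sum_i u i *~ q i) <= norm2 (\sum_i u i *~ q i).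
Proof.
set x := \sum_(i | P i) u i; set y := \sum_i u i *~ q i.
have ey : y = \sum_i (q i)%:~R *: u i by apply: eq_bigr => i _; rewrite scaler_int.
have eyx : y - x = \sum_i (q i - (P i)%:Z)%:~R *: u i.
  rewrite ey /x [X in _ - X]big_mkcond -sumrB; apply: eq_bigr => i _.
  by case: (P i); rewrite intrB scalerBl ?scale1r ?scale0r ?subr0.
rewrite -subr_ge0 /norm2 -dotBl eyx [in X in dot _ X]ey -(@pmulr_rge0 _ 2) // selling_dot.
apply: sumr_ge0 => i _; apply: sumr_ge0 => j _.
have [->|ij] := eqVneq i j; first by rewrite !subrr mul0r mulr0.
rewrite -!intrB -intrM; apply: mulr_ge0; first by rewrite oppr_ge0 u_obtuse.
rewrite ler0z (_ : _ - _ = q i - q j - ((P i)%:Z - (P j)%:Z)); last by ring.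
by apply: int_mulBl_self_ge0; case: (P i); case: (P j).
Qed.
End Selling.

Lemma bounded_column_incidence n (c : 'I_n.+1 -> int) :
  \sum_i c i = 0 -> (forall A : {set 'I_n.+1}, `|\sum_(i in A) c i| <= 1) ->
  exists a b, forall i, c i = (i == a)%:Z - (i == b)%:Z.
Proof.
move=> c_sum0 c_bnd.
have c1 i : -1 <= c i <= 1 by have := c_bnd [set i]; rewrite big_set1 ler_norml.
have c2 i j : i != j -> -1 <= c i + c j <= 1.
  by move=> ij; have := c_bnd [set i; j]; rewrite big_setU1 ?inE // big_set1 ler_norml.
case: (pickP (fun i => 0 < c i)) => [a ca_gt0 | c_le0]; last first.
  exists ord0, ord0 => i; rewrite subrr; apply/eqP; rewrite -oppr_eq0; apply/eqP.
  apply: (@psumr_eq0P _ _ predT (fun i => - c i)) => // [k _|]; last by rewrite sumrN c_sum0 oppr0.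
  by rewrite oppr_ge0 leNgt c_le0.
have ca1 : c a = 1 by have := c1 a; lia.
have c_le0 i : i != a -> c i <= 0 by move=> ia; have := c2 a i; rewrite eq_sym ia ca1; lia.
have rest : \sum_(i | i != a) c i = -1.
  by move: c_sum0; rewrite (bigD1 a) //= ca1 => /eqP; rewrite addrC addr_eq0 => /eqP.
case: (pickP (fun i => c i < 0)) => [b cb_lt0 | c_ge0]; last first.
  suff : 0 <= \sum_(i | i != a) c i by rewrite rest.
  by apply: sumr_ge0 => i _; rewrite leNgt c_ge0.
have cb1 : c b = -1 by have := c1 b; lia.
have ab : (a == b) = false by apply: contraTF cb_lt0 => /eqP <-; rewrite ca1.
exists a, b => i; have [->|ia] := eqVneq i a; first by rewrite ab ca1.
have [->|ib] := eqVneq i b; first by rewrite cb1.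
by have := c2 i b ib; have := c_le0 i ia; lia.
Qed.

Section CoordinateRows.

(* Unlike [enum 'I_n], which is blocked by the opaque [insub], this list reduces, so
   that the boolean checks below can be decided by [lazy] evaluation. *)
Definition ord_list n : seq 'I_n := pmap (@insub_eq _ _ 'I_n) (iota 0 n).

Lemma mem_ord_list n (i : 'I_n) : i \in ord_list n.
Proof. by rewrite /ord_list (eq_pmap (@insub_eqE _ _ 'I_n)) -/(ord_enum n) mem_ord_enum. Qed.

Local Notation bools := [:: false; true].

Definition fun3 (X : Type) (x0 x1 x2 : X) (m : 'I_3) : X := nth x0 [:: x0; x1; x2] m.

Definition all_fun3 (X : Type) (xs : seq X) (P : ('I_3 -> X) -> bool) :=
  all (fun x0 => all (fun x1 => all (fun x2 => P (fun3 x0 x1 x2)) xs) xs) xs.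

Definition has_fun3 (X : Type) (xs : seq X) (P : ('I_3 -> X) -> bool) :=
  has (fun x0 => has (fun x1 => has (fun x2 => P (fun3 x0 x1 x2)) xs) xs) xs.

Definition all_triples (P : 'I_3 -> 'I_3 -> 'I_3 -> bool) :=
  all_fun3 (ord_list 3) (fun t => P (t 0) (t 1) (t 2)).

Definition has_triple (P : 'I_3 -> 'I_3 -> 'I_3 -> bool) :=
  has_fun3 (ord_list 3) (fun t => P (t 0) (t 1) (t 2)).

(* A family of four vectors is encoded by its rows of integer coordinates in the
   orthogonal basis v, see [vcomb] below. *)
Definition sv_row (s : 'I_3 -> bool) (l m : 'I_3) : int := (l == m :> nat)%:Z * (-1) ^+ s l.

Definition odd_row (s : 'I_3 -> bool) (n : 'I_4) (m : 'I_3) : int :=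
  if n == 0 :> nat then - (-1) ^+ s m else (n == m.+1 :> nat)%:Z * (-1) ^+ s m.

Definition even_row (k i j : 'I_3) (s : 'I_3 -> bool) (n : 'I_4) (m : 'I_3) : int :=
  let e l := sv_row s l m in
  if n == 0 :> nat then - e k - e j else if n == 1 :> nat then e i
  else if n == 2 :> nat then e j else e k - e i.

Definition incidence (a b : 'I_3 -> 'I_4) (n : 'I_4) (m : 'I_3) : int :=
  (n == a m :> nat)%:Z - (n == b m :> nat)%:Z.

Definition sub_rows (r r' : 'I_4 -> 'I_3 -> int) :=
  all (fun n => has (fun n' => all (fun m => r n m == r' n' m) (ord_list 3)) (ord_list 4))
    (ord_list 4).

Definition same_rows r r' := sub_rows r r' && sub_rows r' r.

(* For the rows [incidence a b] this says that the edges a m -> b m form a spanning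
   tree of K_4. *)
Definition proper_rows (r : 'I_4 -> 'I_3 -> int) :=
  all (fun n => all (fun n' => has (fun m => r n m + r n' m != 0)
    (ord_list 3)) (ord_list 4)) (ord_list 4).

Definition distinctb (k i j : 'I_3) := [&& i != j :> nat, i != k :> nat & j != k :> nat].

Definition listed_rows (r : 'I_4 -> 'I_3 -> int) :=
  has_fun3 bools (fun s => same_rows r (odd_row s)) ||
  has_triple (fun k i j =>
    distinctb k i j && has_fun3 bools (fun s => same_rows r (even_row k i j s))).

Lemma fun3E (X : Type) (f : 'I_3 -> X) : fun3 (f 0) (f 1) (f 2) = f.
Proof. by apply: functional_extensionality => m; case: (ord3P m) => ->. Qed.

Lemma all_fun3P (X : eqType) (xs : seq X) (P : ('I_3 -> X) -> bool) :
  (forall x, x \in xs) -> all_fun3 xs P -> forall f, P f.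
Proof.
move=> xsT /allP P0 f; rewrite -(fun3E f).
have /allP P1 := P0 _ (xsT (f 0)); have /allP P2 := P1 _ (xsT (f 1)).
exact: P2 _ (xsT (f 2)).
Qed.

Lemma has_fun3P (X : eqType) (xs : seq X) (P : ('I_3 -> X) -> bool) :
  has_fun3 xs P -> exists f, P f.
Proof. by case/hasP => x0 _ /hasP[x1 _ /hasP[x2 _ Px]]; exists (fun3 x0 x1 x2). Qed.

Lemma all_triplesP P : all_triples P -> forall k i j, P k i j.
Proof. by move/(all_fun3P (@mem_ord_list 3)) => PP k i j; apply: (PP (fun3 k i j)). Qed.

Lemma has_tripleP P : has_triple P -> exists k i j, P k i j.
Proof. by case/has_fun3P => t Pt; exists (t 0), (t 1), (t 2). Qed.

Lemma mem_bools (b : bool) : b \in bools.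
Proof. by case: b. Qed.

Lemma distinct3P k i j : reflect (distinct3 k i j) (distinctb k i j).
Proof. by rewrite /distinctb !val_eqE; apply: and3P. Qed.

Lemma distinct3_cover k i j m : distinct3 k i j -> [\/ m = k, m = i | m = j].
Proof.
move/distinct3P; rewrite /distinctb => d.
have : [|| m == k, m == i | m == j].
  by rewrite -!val_eqE; move: d; case: k i j m => [k ?] [i ?] [j ?] [m ?] /=; lia.
by case/or3P => /eqP ->; [constructor 1 | constructor 2 | constructor 3].
Qed.

Lemma incidence_listed_check : all_fun3 (ord_list 4) (fun a =>
  all_fun3 (ord_list 4) (fun b => proper_rows (incidence a b) ==> listed_rows (incidence a b))).
Proof. by lazy. Qed.

Lemma proper_incidence_listed a b :
  proper_rows (incidence a b) -> listed_rows (incidence a b).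
Proof.
move: incidence_listed_check => /(all_fun3P (@mem_ord_list 4))/(_ a).
by move=> /(all_fun3P (@mem_ord_list 4))/(_ b)/implyP.
Qed.

Lemma listed_rowsP r : listed_rows r ->
  (exists s, same_rows r (odd_row s)) \/
  (exists k i j s, distinct3 k i j /\ same_rows r (even_row k i j s)).
Proof.
case/orP => [/has_fun3P[s rs]|/has_tripleP[k [i [j /andP[/distinct3P d]]]]].
  by left; exists s.
by case/has_fun3P => s rs; right; exists k, i, j, s.
Qed.

Lemma odd_row_inj_check : all_fun3 bools (fun s => all_fun3 bools (fun s' =>
  same_rows (odd_row s) (odd_row s') ==> all (fun m => s m == s' m) (ord_list 3))).
Proof. by lazy. Qed.

Lemma odd_row_inj s s' : same_rows (odd_row s) (odd_row s') -> s = s'.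
Proof.
move=> ss'; apply: functional_extensionality => m; apply/eqP.
move: odd_row_inj_check => /(all_fun3P mem_bools)/(_ s)/(all_fun3P mem_bools)/(_ s').
by move=> /implyP/(_ ss')/allP; apply; apply: mem_ord_list.
Qed.

Lemma even_row_inj_check : all_triples (fun k i j => distinctb k i j ==>
  all_fun3 bools (fun s => all_fun3 bools (fun s' =>
    same_rows (even_row k i j s) (even_row k i j s') ==> all (fun m => s m == s' m) (ord_list 3)))).
Proof. by lazy. Qed.

Lemma even_row_inj k i j s s' : distinct3 k i j ->
  same_rows (even_row k i j s) (even_row k i j s') -> s = s'.
Proof.
move=> /distinct3P d ss'; apply: functional_extensionality => m; apply/eqP.
move: even_row_inj_check => /all_triplesP/(_ k i j)/implyP/(_ d).
move=> /(all_fun3P mem_bools)/(_ s)/(all_fun3P mem_bools)/(_ s')/implyP/(_ ss')/allP.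
by apply; apply: mem_ord_list.
Qed.

Definition obtuse_rows (r : 'I_4 -> 'I_3 -> int) :=
  all (fun n => all (fun n' => (n != n') ==> all (fun m => r n m * r n' m <= 0)
    (ord_list 3)) (ord_list 4)) (ord_list 4).

Lemma odd_rows_obtuse s : obtuse_rows (odd_row s).
Proof.
have : all_fun3 bools (fun s => obtuse_rows (odd_row s)) by lazy.
by move/(all_fun3P mem_bools).
Qed.

Lemma even_rows_obtuse k i j s : distinct3 k i j -> obtuse_rows (even_row k i j s).
Proof.
move/distinct3P => d.
have : all_triples (fun k i j =>
    distinctb k i j ==> all_fun3 bools (fun s => obtuse_rows (even_row k i j s))) by lazy.
by move/all_triplesP/(_ k i j)/implyP/(_ d)/(all_fun3P mem_bools).
Qed.

Lemma signr_flip (b b' : bool) : (-1) ^+ (b != b') * (-1) ^+ b = (-1) ^+ b' :> int.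
Proof. by case: b b' => [] []. Qed.

Lemma odd_row_flip s s' n m :
  (-1) ^+ (s m != s' m) * odd_row s n m = odd_row s' n m.
Proof.
by rewrite /odd_row; case: ifP => _; [rewrite mulrN | rewrite mulrCA]; rewrite signr_flip.
Qed.

Lemma sv_row_flip s s' l m :
  (-1) ^+ (s m != s' m) * sv_row s l m = sv_row s' l m.
Proof.
rewrite /sv_row val_eqE; have [->|_] := eqVneq l m; last by rewrite !mul0r mulr0.
by rewrite !mul1r signr_flip.
Qed.

Lemma even_row_flip k i j s s' n m :
  (-1) ^+ (s m != s' m) * even_row k i j s n m = even_row k i j s' n m.
Proof. by rewrite /even_row; repeat case: ifP => _; rewrite ?mulrBr ?mulrN ?sv_row_flip. Qed.

End CoordinateRows.

Section Lattice.
Variable R : realType.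
Implicit Types b a : 'I_3 -> 'rV[R]_3.

Lemma in_lattice0 b : in_lattice b 0.
Proof. by exists (fun _ => 0); rewrite big1. Qed.

Lemma in_latticeD b x y : in_lattice b x -> in_lattice b y -> in_lattice b (x + y).
Proof.
move=> [z ->] [z' ->]; exists (fun l => z l + z' l).
by rewrite -big_split; apply: eq_bigr => l _; rewrite mulrzDr.
Qed.

Lemma in_latticeMz b x n : in_lattice b x -> in_lattice b (x *~ n).
Proof.
move=> [z ->]; exists (fun l => z l * n).
by rewrite mulrz_suml; apply: eq_bigr => l _; rewrite mulrzA.
Qed.

Lemma in_latticeN b x : in_lattice b x -> in_lattice b (- x).
Proof. by rewrite -mulrN1z; apply: in_latticeMz. Qed.

Lemma in_lattice_gen b l : in_lattice b (b l).
Proof.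
exists (fun m => (m == l)%:Z); rewrite (bigD1 l) //= eqxx mulr1z big1 ?addr0 //.
by move=> m /negbTE ->; rewrite mulr0z.
Qed.

Lemma in_lattice_sub a b : (forall l, in_lattice a (b l)) ->
  forall x, in_lattice b x -> in_lattice a x.
Proof.
move=> ab x [z ->]; apply: (big_ind (in_lattice a)) => //; first exact: in_lattice0.
  exact: in_latticeD.
by move=> l _; apply: in_latticeMz.
Qed.
End Lattice.

Section OrthogonalBasis.
Variables (R : realType) (v : 'I_3 -> 'rV[R]_3).
Hypothesis v_neq0 : forall l, v l != 0.
Hypothesis v_orth : forall l m, l != m -> dot (v l) (v m) = 0.

Lemma dot_v l m : dot (v l) (v m) = norm2 (v l) *+ (l == m).
Proof. by have [->|/v_orth->] := eqVneq l m. Qed.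

Lemma lin_indep_of_span b : (forall m, in_lattice b (v m)) -> lin_indep b.
Proof.
move=> vb c cb0; have [q vq] := fin_all_exists vb.
pose B : 'M[R]_3 := \matrix_(l, k) b l 0 k.
pose V : 'M[R]_3 := \matrix_(m, k) v m 0 k.
have QB : \matrix_(m, l) (q m l)%:~R *m B = V.
  apply/matrixP => m k; rewrite !mxE vq summxE; apply: eq_bigr => l _.
  by rewrite !mxE -scaler_int mxE.
have VV : V *m V^T = diag_mx (\row_m norm2 (v m)).
  apply/matrixP => m m'; rewrite !mxE -dot_v.
  by apply: eq_bigr => k _; rewrite !mxE.
have : B \in unitmx.
  suff : V \in unitmx by rewrite -QB unitmx_mul => /andP[].
  rewrite unitmxE unitfE; apply: contraTneq isT => detV0.
  have := congr1 determinant VV; rewrite det_mulmx det_tr detV0 mul0r det_diag.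
  move/esym/eqP; rewrite prodf_seq_eq0 => /hasP[m _].
  by rewrite mxE norm2_eq0 (negbTE (v_neq0 m)).
move=> Bunit.
have cB : \row_l c l *m B = 0.
  apply/rowP => k; move/rowP/(_ k): cb0; rewrite summxE [RHS]mxE => cb0.
  by rewrite !mxE -[X in _ = X]cb0; apply: eq_bigr => l _; rewrite !mxE.
move=> l; have := mulmxK Bunit (\row_l c l).
by rewrite cB mul0mx => /rowP/(_ l); rewrite !mxE.
Qed.

Lemma lattice_basis_of_gens b :
  (forall l, in_lattice v (b l)) -> (forall m, in_lattice b (v m)) -> lattice_basis v b.
Proof.
move=> bv vb; split; first exact: lin_indep_of_span.
by move=> x; split; apply: in_lattice_sub.
Qed.

Definition vcomb (r : 'I_3 -> int) := \sum_l v l *~ r l.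

Lemma dot_vcomb r m : dot (vcomb r) (v m) = (r m)%:~R * norm2 (v m).
Proof.
rewrite /vcomb dot_suml (bigD1 m) //= big1 ?addr0 => [|l ml].
  by rewrite dotMzl dot_v eqxx.
by rewrite dotMzl dot_v (negbTE ml) mulr0.
Qed.

Lemma dot_vcomb2 r r' : dot (vcomb r) (vcomb r') = \sum_m (r m * r' m)%:~R * norm2 (v m).
Proof.
rewrite {1}/vcomb dot_suml; apply: eq_bigr => m _.
by rewrite dotMzl dotC dot_vcomb intrM mulrA.
Qed.

Lemma vcomb_inj r r' : vcomb r = vcomb r' -> forall m, r m = r' m.
Proof.
move=> e m; have := dot_vcomb r m; rewrite e dot_vcomb.
by move/(mulIf _)/eqP; rewrite norm2_eq0 v_neq0 eqr_int => /(_ isT)/eqP.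
Qed.

Lemma eq_vcomb r r' : (forall m, r m = r' m) -> vcomb r = vcomb r'.
Proof. by move=> e; apply: eq_bigr => m _; rewrite e. Qed.

Lemma vcomb0 : vcomb (fun _ => 0) = 0.
Proof. by rewrite /vcomb big1. Qed.

Lemma vcombD r r' : vcomb (fun m => r m + r' m) = vcomb r + vcomb r'.
Proof. by rewrite /vcomb -big_split; apply: eq_bigr => m _; rewrite mulrzDr. Qed.

Lemma vcombN r : vcomb (fun m => - r m) = - vcomb r.
Proof. by rewrite /vcomb -sumrN; apply: eq_bigr => m _; rewrite mulrNz. Qed.

Lemma vcombB r r' : vcomb (fun m => r m - r' m) = vcomb r - vcomb r'.
Proof. by rewrite vcombD vcombN. Qed.

Lemma sv_vcomb s l : sv v s l = vcomb (sv_row s l).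
Proof.
rewrite /vcomb (bigD1 l) //= big1 ?addr0 => [|m /negbTE ml]; last first.
  by rewrite /sv_row val_eqE eq_sym ml mul0r mulr0z.
by rewrite /sv /sv_row eqxx mul1r; case: (s l); rewrite ?expr1 ?expr0 ?mulrN1z ?mulr1z.
Qed.

Lemma odd_sb_vcomb s n : odd_sb v s n = vcomb (odd_row s n).
Proof.
rewrite /odd_sb /odd_row; case: unliftP => [l|] ->.
  rewrite /= sv_vcomb; apply: eq_vcomb => m; rewrite /sv_row eqSS val_eqE.
  by have [->|] := eqVneq l m; rewrite ?mul0r.
rewrite /= !sv_vcomb -!vcombD -vcombN; apply: eq_vcomb => m.
by rewrite /sv_row; case: (ord3P m) => -> /=; rewrite ?mul1r ?mul0r ?addr0 ?add0r.
Qed.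

Lemma even_sb_vcomb k i j s n : even_sb v k i j s n = vcomb (even_row k i j s n).
Proof. by rewrite /even_sb /even_row !sv_vcomb; repeat case: ifP => _; rewrite ?vcombB ?vcombN. Qed.

Lemma in_lattice_vcomb r : in_lattice v (vcomb r).
Proof. by exists r. Qed.

Lemma obtuse_of_rows (u : 'I_4 -> 'rV[R]_3) r :
  (forall n, u n = vcomb (r n)) -> obtuse_rows r -> obtuse u.
Proof.
move=> ur /allP ob n n' nn'; rewrite /conorm !ur dot_vcomb2 -sumrN.
apply: sumr_ge0 => m _; rewrite -mulNr -intrN mulr_ge0 ?norm2_ge0 // ler0z oppr_ge0.
move/allP: (ob n (mem_ord_list n)) => /(_ n' (mem_ord_list n')).
by rewrite nn' => /allP-> //; apply: mem_ord_list.
Qed.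

Lemma sub_rowsP (u w : 'I_4 -> 'rV[R]_3) r r' :
  (forall n, u n = vcomb (r n)) -> (forall n, w n = vcomb (r' n)) ->
  reflect (forall n, exists n', u n = w n') (sub_rows r r').
Proof.
move=> ur wr; apply: (iffP allP) => [sub n | sub n _].
  have /hasP[n' _ /allP e] := sub n (mem_ord_list n).
  by exists n'; rewrite ur wr; apply: eq_vcomb => m; apply/eqP/e/mem_ord_list.
have [n' e] := sub n; apply/hasP; exists n'; first exact: mem_ord_list.
by apply/allP => m _; apply/eqP; apply: vcomb_inj; rewrite -ur -wr.
Qed.

Lemma same_setE (u w : 'I_4 -> 'rV[R]_3) r r' :
  (forall n, u n = vcomb (r n)) -> (forall n, w n = vcomb (r' n)) ->
  same_set u w <-> same_rows r r'.
Proof.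
move=> ur wr; split => [uw | /andP[/(sub_rowsP ur wr) uw /(sub_rowsP wr ur) wu] x].
  apply/andP; split; [apply/(sub_rowsP ur wr) => n | apply/(sub_rowsP wr ur) => n].
    by case: ((uw (u n)).1 (ex_intro _ n erefl)) => n' ->; exists n'.
  by case: ((uw (w n)).2 (ex_intro _ n erefl)) => n' ->; exists n'.
by split=> -[n ->]; [have [n' ->] := uw n | have [n' ->] := wu n]; exists n'.
Qed.

End OrthogonalBasis.

Section Superbase.
Variables (R : realType) (v : 'I_3 -> 'rV[R]_3) (u : 'I_4 -> 'rV[R]_3).

Lemma superbaseE : superbase_of v u <->
  lattice_basis v (fun l => u (lift ord0 l)) /\ u ord0 = - \sum_l u (lift ord0 l).
Proof.
by rewrite sum3 -(inord_lift0 0) -(inord_lift0 1) -(inord_lift0 2).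
Qed.

Hypothesis u_sb : superbase_of v u.

Lemma superbase_sum0 : \sum_n u n = 0.
Proof. by case/superbaseE: u_sb => _ u0; rewrite big_ord_recl u0 addNr. Qed.

Lemma superbase_comb_const (c : 'I_4 -> R) : \sum_n c n *: u n = 0 -> forall n, c n = c ord0.
Proof.
case/superbaseE: u_sb => -[indep _] u0 cu0.
have : \sum_l (c (lift ord0 l) - c ord0) *: u (lift ord0 l) = 0.
  rewrite -[X in _ = X]cu0 [X in _ = X]big_ord_recl u0 scalerN scaler_sumr addrC.
  rewrite -sumrN -big_split /=.
  by apply: eq_bigr => l _; rewrite scalerBl.
move/indep => e n; case: (unliftP ord0 n) => [l|] -> //.
by apply/eqP; rewrite -subr_eq0 e.
Qed.

Lemma superbase_addr_neq0 n n' : u n + u n' != 0.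
Proof.
apply/eqP => unn'; pose c w : R := ((w == n) + (w == n'))%:R.
have delta m : \sum_w (w == m)%:R *: u w = u m.
  by rewrite (bigD1 m) //= eqxx scale1r big1 ?addr0 // => w /negbTE ->; rewrite scale0r.
have cc : forall w, c w = c ord0.
  apply: superbase_comb_const; rewrite -[RHS]unn' -!delta -big_split /=.
  by apply: eq_bigr => w _; rewrite /c natrD scalerDl.
have : (0 < #|~: [set n; n']|)%N.
  by rewrite -(ltn_add2l #|[set n; n']|) cardsC cards2 card_ord addn0; case: (n != n').
case/card_gt0P => w; rewrite in_setC !inE => /norP[/negbTE wn /negbTE wn'].
by move: (cc n); rewrite -(cc w) /c wn wn' eqxx => /eqP; rewrite eqr_nat.
Qed.

Lemma superbase_in_lattice n : in_lattice v (u n).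
Proof.
case/superbaseE: u_sb => -[_ lat] u0; apply/lat; case: (unliftP ord0 n) => [l|] ->.
  exact: (in_lattice_gen (fun l => u (lift ord0 l))).
by rewrite u0; apply: in_latticeN; exists (fun _ => 1); apply: eq_bigr => l _; rewrite mulr1z.
Qed.

Lemma superbase_span y : in_lattice v y -> exists q : 'I_4 -> int, y = \sum_n u n *~ q n.
Proof.
case/superbaseE: u_sb => -[_ lat] _ /lat[q ->].
exists (fun n => if unlift ord0 n is Some l then q l else 0).
by rewrite [RHS]big_ord_recl unlift_none mulr0z add0r; apply: eq_bigr => l _; rewrite liftK.
Qed.

End Superbase.

Section Classification.
Variables (R : realType) (v : 'I_3 -> 'rV[R]_3).
Hypothesis v_neq0 : forall l, v l != 0.
Hypothesis v_orth : forall l m, l != m -> dot (v l) (v m) = 0.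

Lemma obtuse_superbase_incidence u : superbase_of v u -> obtuse u ->
  exists a b, forall n, u n = vcomb v (incidence a b n).
Proof.
move=> sb ob.
have [z uz] := fin_all_exists (fun n => superbase_in_lattice sb n : exists r, u n = vcomb v r).
have col m : exists ab : 'I_4 * 'I_4, forall n, z n m = (n == ab.1)%:Z - (n == ab.2)%:Z.
  have w_gt0 := norm2_gt0 (v_neq0 m).
  have dot_sum (P : pred 'I_4) :
      dot (\sum_(n | P n) u n) (v m) = (\sum_(n | P n) z n m)%:~R * norm2 (v m).
    rewrite dot_suml rmorph_sum mulr_suml; apply: eq_bigr => n _.
    by rewrite uz dot_vcomb.
  have voronoi (A : {set 'I_4}) y : in_lattice v y -> dot (\sum_(n in A) u n) y <= norm2 y.
    case/(superbase_span sb) => q ->; apply: obtuse_dot_le_norm2 => [|i j /ob].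
      exact: superbase_sum0 sb.
    by rewrite /conorm oppr_ge0.
  have c_sum0 : \sum_n z n m = 0.
    move: (dot_sum predT); rewrite (superbase_sum0 sb) dot0l => /esym/eqP.
    by rewrite mulf_eq0 norm2_eq0 (negbTE (v_neq0 m)) orbF intr_eq0 => /eqP.
  have c_bnd (A : {set 'I_4}) : `|\sum_(n in A) z n m| <= 1.
    have := voronoi A _ (in_lattice_gen v m).
    have := voronoi A _ (in_latticeN (in_lattice_gen v m)).
    rewrite dotNr norm2N !dot_sum => lo hi; rewrite -(ler_int R) intr_norm ler_norml.
    by apply/andP; split; nra.
  have [a [b e]] := bounded_column_incidence c_sum0 c_bnd.
  by exists (a, b).
have [ab e] := fin_all_exists col.
exists (fun m => (ab m).1), (fun m => (ab m).2) => n.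
by rewrite uz; apply: eq_vcomb => m; rewrite e /incidence !val_eqE.
Qed.

Lemma obtuse_superbase_listed u : superbase_of v u -> obtuse u ->
  (exists s, same_set u (odd_sb v s)) \/
  (exists k i j s, distinct3 k i j /\ same_set u (even_sb v k i j s)).
Proof.
move=> sb ob; have [a [b ur]] := obtuse_superbase_incidence sb ob.
have proper : proper_rows (incidence a b).
  apply/allP => n _; apply/allP => n' _; apply: contraR (superbase_addr_neq0 sb n n').
  move=> /hasPn r0; rewrite !ur -vcombD -(vcomb0 v); apply/eqP/eq_vcomb => m.
  by apply/eqP; rewrite -[_ == 0]negbK r0 ?mem_ord_list.
case/listed_rowsP: (proper_incidence_listed proper) => [[s rs]|[k [i [j [s [d rs]]]]]].
  by left; exists s; apply/(same_setE v_neq0 v_orth ur (odd_sb_vcomb v s)).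
right; exists k, i, j, s; split=> //.
exact/(same_setE v_neq0 v_orth ur (even_sb_vcomb v k i j s)).
Qed.

Lemma odd_sb_inj s s' : same_set (odd_sb v s) (odd_sb v s') -> s = s'.
Proof.
by move/(same_setE v_neq0 v_orth (odd_sb_vcomb v s) (odd_sb_vcomb v s')); apply: odd_row_inj.
Qed.

Lemma even_sb_inj k i j s s' : distinct3 k i j ->
  same_set (even_sb v k i j s) (even_sb v k i j s') -> s = s'.
Proof.
move=> d /(same_setE v_neq0 v_orth (even_sb_vcomb v k i j s) (even_sb_vcomb v k i j s')).
exact: even_row_inj.
Qed.

End Classification.

Section ListedSuperbases.
Variables (R : realType) (v : 'I_3 -> 'rV[R]_3).
Hypothesis v_neq0 : forall l, v l != 0.
Hypothesis v_orth : forall l m, l != m -> dot (v l) (v m) = 0.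

Lemma v_sv s l : v l = sv v s l *~ (-1) ^+ s l.
Proof. by rewrite /sv; case: (s l); rewrite ?expr1 ?mulrN1z ?opprK ?mulr1z. Qed.

Lemma odd_superbase s : superbase_of v (odd_sb v s).
Proof.
have odd_lift l : odd_sb v s (lift ord0 l) = sv v s l by rewrite /odd_sb liftK.
apply/superbaseE; split.
  apply: (lattice_basis_of_gens v_neq0 v_orth) => [l|m].
    by rewrite odd_sb_vcomb; apply: in_lattice_vcomb.
  rewrite (v_sv s m) -odd_lift; apply: in_latticeMz.
  exact: (in_lattice_gen (fun l => odd_sb v s (lift ord0 l))).
by rewrite (eq_bigr _ (fun l _ => odd_lift l)) sum3 /odd_sb unlift_none.
Qed.

Lemma even_superbase k i j s : distinct3 k i j -> superbase_of v (even_sb v k i j s).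
Proof.
move=> d; pose b l := even_sb v k i j s (lift ord0 l).
have b0 : b 0 = sv v s i by [].
have b1 : b 1 = sv v s j by [].
have b2 : b 2 = sv v s k - sv v s i by [].
apply/superbaseE; split; last first.
  rewrite sum3 -/(b 0) -/(b 1) -/(b 2) b0 b1 b2 /even_sb /=.
  by apply/rowP => c; rewrite !mxE; ring.
apply: (lattice_basis_of_gens v_neq0 v_orth) => [l|m].
  by rewrite even_sb_vcomb; apply: in_lattice_vcomb.
have bl l : in_lattice b (b l) := in_lattice_gen b l.
case: (distinct3_cover m d) => ->; rewrite (v_sv s); apply: in_latticeMz.
- by rewrite -(subrK (sv v s i) (sv v s k)) -b0 -b2; apply: in_latticeD.
- by rewrite -b0.
- by rewrite -b1.
Qed.

Lemma odd_obtuse s : obtuse (odd_sb v s).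
Proof. exact: obtuse_of_rows (odd_sb_vcomb v s) (odd_rows_obtuse s). Qed.

Lemma even_obtuse k i j s : distinct3 k i j -> obtuse (even_sb v k i j s).
Proof. by move=> d; apply: obtuse_of_rows (even_sb_vcomb v k i j s) (even_rows_obtuse s d). Qed.

Lemma dot_sv s l l' : dot (sv v s l) (sv v s l') = norm2 (v l) *+ (l == l').
Proof.
have [<-|ll'] := eqVneq l l'; rewrite /sv.
  by case: (s l); rewrite ?dotNl ?dotNr ?opprK (dot_v v_orth) eqxx.
by case: (s l); case: (s l'); rewrite ?dotNl ?dotNr (dot_v v_orth) (negbTE ll') ?oppr0.
Qed.

Lemma odd_conorm0 s l : conorm (odd_sb v s) ord0 (lift ord0 l) = norm2 (v l).
Proof.
rewrite /conorm /odd_sb unlift_none liftK dotNl opprK !dotDl !dot_sv.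
by case: (ord3P l) => -> /=; rewrite ?addr0 ?add0r.
Qed.

Lemma odd_conorm_lift s l l' : l != l' -> conorm (odd_sb v s) (lift ord0 l) (lift ord0 l') = 0.
Proof. by move=> /negbTE ll'; rewrite /conorm /odd_sb !liftK dot_sv ll' oppr0. Qed.

Lemma odd_sb_coform s : coform (perm_conorm 1 (conorm (odd_sb v s))) = odd_coform v.
Proof.
apply/matrixP => r c; rewrite !mxE /perm_conorm !perm1.
case: r => [[|[|//]] ?] /=; last by rewrite odd_conorm0.
case: (ord3P c) => -> /=.
all: by rewrite ?(inord_lift0 0) ?(inord_lift0 1) ?(inord_lift0 2) odd_conorm_lift.
Qed.

Lemma even_sb_coform k i j s : distinct3 k i j ->
  coform (perm_conorm (tperm (lift ord0 1) (lift ord0 2)) (conorm (even_sb v k i j s)))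
  = even_coform v k i j.
Proof.
case=> ij ik jk; set t := tperm _ _.
have t0 : t ord0 = ord0 by rewrite tpermD // eq_sym neq_lift.
have t1 : t (lift ord0 0) = lift ord0 0 by rewrite tpermD // (inj_eq lift_inj).
have t2 : t (lift ord0 1) = lift ord0 2 by rewrite tpermL.
have t3 : t (lift ord0 2) = lift ord0 1 by rewrite tpermR.
apply/matrixP => r c; rewrite !mxE /perm_conorm.
case: r => [[|[|//]] ?]; case: (ord3P c) => -> /=.
all: rewrite ?(inord_lift0 0) ?(inord_lift0 1) ?(inord_lift0 2) ?t0 ?t1 ?t2 ?t3.
all: rewrite /conorm /even_sb /= ?(dotDl, dotDr, dotNl, dotNr, dot_sv) ?eqxx.
all: rewrite ?[k == j]eq_sym ?[k == i]eq_sym ?[j == i]eq_sym.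
all: by rewrite ?(negbTE ij) ?(negbTE ik) ?(negbTE jk) /= ?mulr0n ?mulr1n; ring.
Qed.

Definition flip (D : pred 'I_3) (x : 'rV[R]_3) :=
  x - \sum_(m | D m) (2 * dot x (v m) / norm2 (v m)) *: v m.

Lemma dot_sum_v (c : 'I_3 -> R) (D : pred 'I_3) m :
  dot (\sum_(l | D l) c l *: v l) (v m) = (D m)%:R * c m * norm2 (v m).
Proof.
rewrite dot_suml big_mkcond (bigD1 m) //= big1 ?addr0 => [|l lm].
  by case: (D m); rewrite ?dotZl ?(dot_v v_orth) ?eqxx ?mul1r ?mul0r ?dot0l.
by case: (D l); rewrite ?dotZl ?(dot_v v_orth) ?(negbTE lm) ?mulr0 ?dot0l.
Qed.

Lemma flip_norm2 D x : norm2 (flip D x) = norm2 x.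
Proof.
rewrite /flip; set P := \sum_(m | D m) _.
have xP : dot x P = \sum_(m | D m) 2 * dot x (v m) ^+ 2 / norm2 (v m).
  by rewrite dot_sumr; apply: eq_bigr => m _; rewrite dotZr; ring.
have PP : dot P P = dot x P + dot x P.
  rewrite xP -big_split {1}/P dot_suml; apply: eq_bigr => m Dm.
  rewrite dotZl (dotC (v m)) /P dot_sum_v Dm mul1r /=; field.
  by rewrite norm2_eq0 v_neq0.
by rewrite /norm2 dotBl !dotBr (dotC P x) PP; ring.
Qed.

Lemma flipB D x y : flip D (x - y) = flip D x - flip D y.
Proof.
rewrite /flip (eq_bigr (fun m => (2 * dot x (v m) / norm2 (v m)) *: v m
  - (2 * dot y (v m) / norm2 (v m)) *: v m)) => [|m _].
  by rewrite sumrB; apply/rowP => k; rewrite !mxE; ring.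
by rewrite -scalerBl dotBl mulrBr mulrBl.
Qed.

Lemma flip_isometry D : isometry0 (flip D).
Proof.
split=> [|x y]; last by rewrite -flipB flip_norm2.
by rewrite /flip big1 ?subr0 // => m _; rewrite dot0l mulr0 mul0r scale0r.
Qed.

Lemma flip_vcomb D r : flip D (vcomb v r) = vcomb v (fun m => (-1) ^+ D m * r m).
Proof.
rewrite /flip [X in _ - X]big_mkcond /vcomb -sumrB; apply: eq_bigr => m _ /=.
case: (D m); rewrite ?subr0 ?mul1r // -/(vcomb v r) (dot_vcomb v_orth) expr1 mulN1r.
rewrite -!scaler_int -scalerBl intrN; congr (_ *: _); field.
by rewrite norm2_eq0 v_neq0.
Qed.

Lemma odd_sb_isometric s s' : isometric (odd_sb v s) (odd_sb v s').
Proof.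
exists (flip (fun m => s m != s' m)); split; first exact: flip_isometry.
apply: (@same_set_of _ _ _ id id) => n /=; rewrite !odd_sb_vcomb flip_vcomb //;
  by apply: eq_vcomb => m; rewrite odd_row_flip.
Qed.

Lemma even_sb_isometric k i j s s' : isometric (even_sb v k i j s) (even_sb v k i j s').
Proof.
exists (flip (fun m => s m != s' m)); split; first exact: flip_isometry.
apply: (@same_set_of _ _ _ id id) => n /=; rewrite !even_sb_vcomb flip_vcomb //;
  by apply: eq_vcomb => m; rewrite even_row_flip.
Qed.

(* Negating v_k and reversing the order of the vectors exchanges the roles of i and j. *)
Lemma even_sb_swap k i j s : distinct3 k i j ->
  same_set (even_sb v k i j s) (even_sb v k j i (fun l => (l == k) (+) s l)).
Proof.
case=> ij ik jk; set s' := fun l => _.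
have sk : sv v s' k = - sv v s k by rewrite /sv /s' eqxx; case: (s k); rewrite ?opprK.
have si : sv v s' i = sv v s i by rewrite /sv /s' (negbTE ik).
have sj : sv v s' j = sv v s j by rewrite /sv /s' (negbTE jk).
apply: (@same_set_of _ _ _ (@rev_ord 4) (@rev_ord 4)) => -[[|[|[|[|//]]]] ?];
  by rewrite /even_sb /= ?sk ?si ?sj ?opprK.
Qed.

Lemma even_sb_isometric_distinct k i j s i' j' s' : distinct3 k i j -> distinct3 k i' j' ->
  isometric (even_sb v k i j s) (even_sb v k i' j' s').
Proof.
move=> d d'; have : ((i' == i) && (j' == j)) || ((i' == j) && (j' == i)).
  move: d d' => /distinct3P + /distinct3P; rewrite /distinctb -!val_eqE.
  by case: k i j i' j' => [k ?] [i ?] [j ?] [i' ?] [j' ?] /=; lia.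
case/orP => /andP[/eqP-> /eqP->]; first exact: even_sb_isometric.
have dji : distinct3 k j i by case: d => ij ik jk; split; rewrite // eq_sym.
exact: isometric_same_set (even_sb_isometric _ _ _ _ _) (same_set_sym (even_sb_swap s' dji)).
Qed.

End ListedSuperbases.

Theorem lemma4p5 (R : realType) (v : 'I_3 -> 'rV[R]_3)
  (hv0 : forall l, v l != 0)
  (horth : forall l m, l != m -> dot (v l) (v m) = 0) :
  (* every obtuse superbase is (as a set) one of the listed ones *)
  (forall u, superbase_of v u -> obtuse u ->
     (exists s, same_set u (odd_sb v s)) \/
     (exists k i j s, distinct3 k i j /\ same_set u (even_sb v k i j s)))
  (* the listed ones are obtuse superbases *)
  /\ (forall s, superbase_of v (odd_sb v s) /\ obtuse (odd_sb v s))
  /\ (forall k i j s, distinct3 k i j ->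
        superbase_of v (even_sb v k i j s) /\ obtuse (even_sb v k i j s))
  (* class (o): 8 distinct superbases, pairwise isometric, coform *)
  /\ (forall s s', same_set (odd_sb v s) (odd_sb v s') -> s = s')
  /\ (forall s s', isometric (odd_sb v s) (odd_sb v s'))
  /\ (forall s, exists sigma : 'S_4,
        coform (perm_conorm sigma (conorm (odd_sb v s))) = odd_coform v)
  (* classes (e): for each k, 8 distinct superbases (i,j swappable),
     pairwise isometric, coform *)
  /\ (forall k i j s s', distinct3 k i j ->
        same_set (even_sb v k i j s) (even_sb v k i j s') -> s = s')
  /\ (forall k i j s, distinct3 k i j ->
        exists s', same_set (even_sb v k i j s) (even_sb v k j i s'))
  /\ (forall k i j s i' j' s', distinct3 k i j -> distinct3 k i' j' ->
        isometric (even_sb v k i j s) (even_sb v k i' j' s'))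
  /\ (forall k i j s, distinct3 k i j -> exists sigma : 'S_4,
        coform (perm_conorm sigma (conorm (even_sb v k i j s)))
          = even_coform v k i j).
Proof.
split; first exact: obtuse_superbase_listed.
split; first by move=> s; split; [exact: odd_superbase | exact: odd_obtuse].
split; first by move=> k i j s d; split; [exact: even_superbase | exact: even_obtuse].
split; first exact: odd_sb_inj.
split; first exact: odd_sb_isometric.
split; first by move=> s; exists 1%g; apply: odd_sb_coform.
split; first by move=> k i j s s'; apply: even_sb_inj.
split; first by move=> k i j s d; eexists; apply: even_sb_swap.
split; first by move=> k i j s i' j' s'; apply: even_sb_isometric_distinct.
by move=> k i j s d; eexists; apply: even_sb_coform.
Qed.
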